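(* Let $q$ be a prime power, $b$ a positive integer, and $M,D$ positive integers with $M>q^{b-1}$ and $D\ge b$. Then $N_b(M,D)\le N_H(M,D-b+1)$.
   Context: For $\boldsymbol{z}=(z_0,\ldots,z_{n-1}),\boldsymbol{w}\in\mathbb{F}_q^n$, $d_b(\boldsymbol{z},\boldsymbol{w})$ is the number of $i\in\{0,\ldots,n-1\}$ with $(z_i,\ldots,z_{i+b-1})\ne(w_i,\ldots,w_{i+b-1})$ (indices mod $n$). $N_b(M,D)$ is the smallest $r$ such that there exist $\boldsymbol{p}_1,\ldots,\boldsymbol{p}_M\in\mathbb{F}_q^r$ with $d_b(\boldsymbol{p}_i,\boldsymbol{p}_j)\ge D$ for all $i\ne j$; $N_H(M,D)$ is defined the same way with the Hamming distance $d_H$ in place of $d_b$. *)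

From Stdlib Require Import ClassicalEpsilon.
From mathcomp Require Import all_boot all_algebra all_field.
Set Implicit Arguments. Unset Strict Implicit. Unset Printing Implicit Defensive.

Lemma shift_lt n (i : 'I_n) (k : nat) : (i + k) %% n < n.
Proof. by apply: ltn_pmod; apply: leq_ltn_trans (ltn_ord i). Qed.

Definition shift n (i : 'I_n) (k : nat) : 'I_n := Ordinal (shift_lt i k).

Definition dist_b (F : finFieldType) (b n : nat) (z w : {ffun 'I_n -> F}) : nat :=
  #|[set i : 'I_n | [exists k : 'I_b, z (shift i k) != w (shift i k)]]|.

Definition dist_H (F : finFieldType) (n : nat) (z w : {ffun 'I_n -> F}) : nat :=
  #|[set i : 'I_n | z i != w i]|.

Definition has_code (F : finFieldType)
    (dist : forall n, {ffun 'I_n -> F} -> {ffun 'I_n -> F} -> nat)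
    (M D r : nat) : bool :=
  [exists c : {ffun 'I_M -> {ffun 'I_r -> F}},
     [forall i : 'I_M, [forall j : 'I_M, (i != j) ==> (D <= dist r (c i) (c j))]]].

(* smallest n with P n (0 by convention if there is none) *)
Definition Nmin (P : pred nat) : nat :=
  match excluded_middle_informative (exists n, P n) with
  | left h => ex_minn h
  | right _ => 0
  end.

Definition N_b (F : finFieldType) (b M D : nat) : nat :=
  Nmin (fun r => has_code (fun n => @dist_b F b n) M D r).

Definition N_H (F : finFieldType) (M D : nat) : nat :=
  Nmin (fun r => has_code (fun n => @dist_H F n) M D r).

(** Take a Hamming code of length [r] with [M] words and minimum distance
    [D - b + 1].  The Singleton bound [M <= q ^ (r + 1 - (D - b + 1))]
    together with [M > q ^ (b - 1)] forces [r >= D].  For two codewords whose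
    difference has support [S], the [b]-symbol distance counts the positions
    whose length-[b] window meets [S]; this cyclic window cover of a nonempty
    [S] has at least [min(r, |S| + b - 1) >= D] elements, since each extra
    symbol of window enlarges the cover unless it is already everything.  So
    the same code is a [b]-symbol code of minimum distance [D]. *)

From Stdlib Require Import ClassicalEpsilon.
From mathcomp Require Import all_boot all_algebra all_field.
From mathcomp Require Import zify.
Import GRing.Theory.
Set Implicit Arguments. Unset Strict Implicit. Unset Printing Implicit Defensive.

Lemma Nmin_le (P : pred nat) n : P n -> Nmin P <= n.
Proof.
rewrite /Nmin => Pn; case: excluded_middle_informative => [exP | noP //].
by case: ex_minnP => m _; apply.
Qed.

Lemma Nmin_sat (P : pred nat) : (exists n, P n) -> P (Nmin P).
Proof.
rewrite /Nmin => exP; case: excluded_middle_informative => [exP' | //].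
by case: ex_minnP.
Qed.

Section Codes.

Variable F : finFieldType.

Lemma has_codeP (dist : forall n, {ffun 'I_n -> F} -> {ffun 'I_n -> F} -> nat)
    M D r :
  reflect (exists c : 'I_M -> {ffun 'I_r -> F},
             forall i j, i != j -> D <= dist r (c i) (c j))
          (has_code dist M D r).
Proof.
apply: (iffP existsP) => [[c /forallP hc] | [c hc]].
  by exists c => i j nij; have /forallP/(_ j) := hc i; rewrite nij.
exists (finfun c); apply/forallP => i; apply/forallP => j.
by apply/implyP => nij; rewrite !ffunE; apply: hc.
Qed.

Lemma dist_H_gt0 n (x y : {ffun 'I_n -> F}) : (0 < dist_H x y) = (x != y).
Proof.
rewrite /dist_H card_gt0; apply/set0Pn/idP => [[t] | neq_xy].
  by rewrite inE; apply: contra => /eqP ->.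
have /existsP [t neq_t] : [exists t, x t != y t].
  apply: contraNT neq_xy => /existsPn eq_xy; apply/eqP/ffunP => t.
  by apply/eqP; have := eq_xy t; rewrite negbK.
by exists t; rewrite inE.
Qed.

Lemma has_code_H_exists M D : exists r, has_code (fun n => @dist_H F n) M D r.
Proof.
exists #|{: 'I_M * 'I_D}|; apply/has_codeP.
exists (fun i => [ffun t => if (enum_val t).1 == i then 1%R else 0%R : F]) => i j nij.
have inj_block : injective (fun k : 'I_D => enum_rank (i, k)).
  by move=> k1 k2 /enum_rank_inj [].
rewrite /dist_H -{1}(card_ord D) -cardsT -(card_imset _ inj_block).
apply/subset_leq_card/subsetP => _ /imsetP [k _ ->].
by rewrite inE !ffunE enum_rankK /= eqxx (negbTE nij) oner_neq0.
Qed.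

Lemma Singleton_bound M D n (c : 'I_M -> {ffun 'I_n -> F}) :
  0 < D -> (forall i j, i != j -> D <= dist_H (c i) (c j)) ->
  M <= #|F| ^ (n.+1 - D).
Proof.
move=> D_gt0 hc; set m := n.+1 - D.
have le_mn : m <= n by rewrite /m; lia.
pose prefix (x : {ffun 'I_n -> F}) := [ffun k : 'I_m => x (widen_ord le_mn k)].
suff inj_c : injective (prefix \o c).
  by have := leq_card _ inj_c; rewrite card_ffun !card_ord.
move=> i j /= /ffunP eq_prefix; apply/eqP/negPn/negP => /hc.
set P := [set widen_ord le_mn k | k in 'I_m].
have diff_sub : [set t | c i t != c j t] \subset ~: P.
  apply/subsetP => t; rewrite !inE; apply: contraNN => /imsetP [k _ ->].
  by have := eq_prefix k; rewrite !ffunE => ->.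
have card_P : #|P| = m.
  by rewrite card_imset ?card_ord // => k1 k2 /(congr1 val) /= /val_inj.
have := cardsC P; rewrite card_P card_ord.
have := subset_leq_card diff_sub; rewrite -/(dist_H _ _); lia.
Qed.

End Codes.

Section WindowCover.

Variable n : nat.

Lemma shift_shift (i : 'I_n) m k : shift (shift i m) k = shift i (m + k).
Proof. by apply/val_inj; rewrite /= modnDml addnA. Qed.

Lemma shift0 (i : 'I_n) : shift i 0 = i.
Proof. by apply/val_inj; rewrite /= addn0 modn_small. Qed.

Definition window_cover (S : {set 'I_n}) k :=
  [set i : 'I_n | [exists j : 'I_k, shift i j \in S]].

Lemma dist_b_window_cover (F : finFieldType) b (x y : {ffun 'I_n -> F}) :
  dist_b b x y = #|window_cover [set t | x t != y t] b|.
Proof.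
by rewrite /dist_b; apply: eq_card => i; rewrite !inE; apply: eq_existsb => j; rewrite inE.
Qed.

Lemma sub_window_cover (S : {set 'I_n}) k : S \subset window_cover S k.+1.
Proof.
apply/subsetP => i iS; rewrite /window_cover inE.
by apply/existsP; exists ord0; rewrite shift0.
Qed.

Lemma window_coverS (S : {set 'I_n}) k :
  window_cover S k.+2 =
  window_cover S k.+1 :|: [set i | shift i 1 \in window_cover S k.+1].
Proof.
apply/setP => i; rewrite /window_cover !inE.
apply/existsP/orP => [[j Sj] | [] /existsP [j Sj]].
- have [lt_jk | ] := ltnP j k.+1; first by left; apply/existsP; exists (Ordinal lt_jk).
  move=> le_kj; have eq_j : j = k.+1 :> nat by have := ltn_ord j; lia.
  by right; apply/existsP; exists ord_max; rewrite shift_shift add1n -eq_j.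
- by exists (widen_ord (leqnSn _) j).
- by exists (lift ord0 j); rewrite lift0 -add1n -shift_shift.
Qed.

Lemma pred_closed_setT (A : {set 'I_n}) a :
  a \in A -> (forall i, shift i 1 \in A -> i \in A) -> A = setT.
Proof.
move=> aA closedA.
have closed_shift m i : shift i m \in A -> i \in A.
  elim: m i => [|m IHm] i; first by rewrite shift0.
  by rewrite -add1n -shift_shift => /IHm /closedA.
(* The [+ n] keeps the truncated subtraction exact. *)
apply/setP => i; rewrite inE; apply: (closed_shift (a + n - i)).
suff -> : shift i (a + n - i) = a by [].
apply/val_inj => /=; have := ltn_ord i; have := ltn_ord a => ? ?.
by rewrite (_ : i + (a + n - i) = a + n) ?modnDr ?modn_small //; lia.
Qed.

Lemma card_window_cover (S : {set 'I_n}) k :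
  S != set0 -> minn n (#|S| + k) <= #|window_cover S k.+1|.
Proof.
move=> /set0Pn [a Sa]; elim: k => [|k IHk].
  by rewrite addn0 (leq_trans (geq_minr _ _)) // subset_leq_card ?sub_window_cover.
rewrite window_coverS; set A := window_cover S k.+1 in IHk *.
have [-> | A_neqT] := eqVneq A setT.
  by rewrite setTU cardsT card_ord geq_minl.
have A_grows : A \proper A :|: [set i | shift i 1 \in A].
  rewrite properE subsetUl /=; apply: contra A_neqT => grow_sub.
  apply/eqP/(@pred_closed_setT _ a); first exact: subsetP (sub_window_cover _ _) _ Sa.
  by move=> i shift_iA; apply: (subsetP grow_sub); apply/setUP; right; rewrite inE.
by have := proper_card A_grows; move: IHk; lia.
Qed.

Lemma dist_b_ge_dist_H (F : finFieldType) b (x y : {ffun 'I_n -> F}) :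
  0 < b -> x != y -> minn n (dist_H x y + b.-1) <= dist_b b x y.
Proof.
move=> b_gt0; rewrite -dist_H_gt0 dist_b_window_cover -(prednK b_gt0) card_gt0.
exact: card_window_cover.
Qed.

End WindowCover.

Theorem lemma4p5 (F : finFieldType) (b M D : nat) :
  0 < b -> 0 < M -> 0 < D ->
  #|F| ^ b.-1 < M -> b <= D ->
  N_b F b M D <= N_H F M (D - b + 1).
Proof.
move=> b_gt0 _ _ M_large le_bD.
set r := N_H F M (D - b + 1).
have /has_codeP [c hc] : has_code (fun n => @dist_H F n) M (D - b + 1) r.
  exact/Nmin_sat/has_code_H_exists.
clearbody r.
have le_Dr : D <= r.
  rewrite leqNgt; apply: contraL M_large => lt_rD; rewrite -leqNgt.
  have D'_gt0 : 0 < D - b + 1 by rewrite addn1.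
  apply: leq_trans (Singleton_bound D'_gt0 hc) _.
  by apply: leq_pexp2l; [apply/card_gt0P; exists 0%R | lia].
apply: Nmin_le; apply/has_codeP; exists c => i j nij.
have dist_ij := hc i j nij.
have neq_ij : c i != c j by rewrite -dist_H_gt0 (leq_trans _ dist_ij) ?addn1.
apply: leq_trans (dist_b_ge_dist_H b_gt0 neq_ij).
by rewrite leq_min le_Dr /=; lia.
Qed.
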